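(* Let $s,t$ be real numbers with $t\ge s>0$, let $n\ge 3$, and let $A=(a_{ij}) \in \mathcal{G}_s^{n\times n}([0,t])$. Then for every $k\in\{2,3,\dots,n-1\}$, $$\Big| (a_{11}a_{2k} - s\,a_{1k})\,H_{k+1}(A) - (a_{11}a_{2,k+1} - s\,a_{1,k+1})\, s\, H_{k+2}(A)\Big| \le t^2 M_{n-k} + t s^2 M_{n-k-1},$$ and, if $n$ is even, $$\big| (a_{11}a_{2n} - s\,a_{1n})\,H_{n+1}(A)\big| \le t^2 M_0.$$
   Context: For a real number $s$, a positive integer $n$ and a set $P \subseteq \mathbb{R}$, $\mathcal{G}_s^{n\times n}(P)$ denotes the set of all $n\times n$ real upper Hessenberg matrices $A=(a_{ij})$ with $a_{i+1,i} = s$ for $1\le i\le n-1$, $a_{ij}=0$ for $i > j+1$, and $a_{ij}\in P$ for all $i \le j$. For $m\ge 1$, $M_m$ is the maximum of $|\det B|$ over $B\in\mathcal{G}_s^{m\times m}([0,t])$, and $M_0 := 1$. For an $n\times n$ matrix $A$ and $1\le k\le n$, $H_k(A)$ is the determinant of the bottom-right $(n+1-k)\times(n+1-k)$ submatrix of $A$ (rows and columns $k,\dots,n$), and $H_{n+1}(A):=1$. *)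

From HB Require Import structures.
From mathcomp Require Import all_boot all_order all_algebra.
From mathcomp Require Import boolp classical_sets reals.
Set Implicit Arguments. Unset Strict Implicit. Unset Printing Implicit Defensive.
Import Order.TTheory GRing.Theory Num.Theory.
Local Open Scope ring_scope.
Local Open Scope classical_set_scope.

(* 1-based entry access: entry A i j = a_{ij} for 1 <= i, j <= n (0 otherwise). *)
Definition entry (R : realType) (n : nat) (A : 'M[R]_n) (i j : nat) : R :=
  match @insub nat (fun x => x < n)%N _ i.-1, @insub nat (fun x => x < n)%N _ j.-1 with
  | Some i', Some j' => A (i' : 'I_n) (j' : 'I_n)
  | _, _ => 0
  end.

(* A is in G_s^{n x n}(P): upper Hessenberg, subdiagonal equal to s,
   zero below the subdiagonal, entries on/above diagonal in P.
   (0-based indices; the relations i = j+1, i > j+1, i <= j are shift-invariant.) *)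
Definition inG (R : realType) (s : R) (P : R -> Prop) (n : nat) (A : 'M[R]_n) : Prop :=
  forall i j : 'I_n,
    ((i : nat) = j.+1 -> A i j = s) /\
    ((j.+1 < i)%N -> A i j = 0) /\
    ((i <= j)%N -> P (A i j)).

Definition Mmax (R : realType) (s t : R) (m : nat) : R :=
  if m == 0%N then 1
  else sup [set x | exists B : 'M[R]_m,
                      inG s (fun y => 0 <= y <= t) B /\ x = `|\det B|].

(* H_k(A) = det of the bottom-right submatrix on rows/cols k..n (1-based);
   for k = n+1 this is the empty determinant, equal to 1. *)
Definition Hk (R : realType) (n : nat) (A : 'M[R]_n) (k : nat) : R :=
  if k == n.+1 then 1
  else \det (\matrix_(i < n.+1 - k, j < n.+1 - k) entry A (i + k)%N (j + k)%N).

(* Expanding H_(k+1)(A) along its first column gives H_(k+1) = r h - s g, where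
   r = a_(k+1,k+1), h = H_(k+2)(A) and g is the minor deleting the second row of
   that block; h and g are determinants of matrices of G_s([0,t]) of size n-k-1,
   and t h - s g is the determinant of such a matrix of size n-k (replace r by t).
   The coefficients a, b of the statement lie in [-st, t^2], and bordering gives
   t M_m <= M_(m+1).  A case analysis on a and b then bounds a (r h - s g) - s b h;
   in the decisive case it is a nonnegative combination of t h - s g and - s g. *)

From HB Require Import structures.
From mathcomp Require Import all_boot all_order all_algebra.
From mathcomp Require Import boolp classical_sets reals.
From mathcomp Require Import ring lra zify perm.
Import Order.TTheory GRing.Theory Num.Theory.
Set Implicit Arguments. Unset Strict Implicit. Unset Printing Implicit Defensive.
Local Open Scope ring_scope.

Lemma mul_sub_range (R : realDomainType) (s t p q u : R) :
  0 <= s -> 0 <= p <= t -> 0 <= q <= t -> 0 <= u <= t ->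
  -(s * t) <= p * q - s * u <= t ^+ 2.
Proof.
by move=> ? /andP[? ?] /andP[? ?] /andP[? ?]; rewrite expr2; apply/andP; split; nra.
Qed.

Section TwoMinorBound.
Variables (R : realFieldType) (s t M M' r h g : R).
Hypotheses (s_gt0 : 0 < s) (s_le_t : s <= t) (r_ge0 : 0 <= r) (r_le_t : r <= t).
Hypotheses (h_le : `|h| <= M') (g_le : `|g| <= M').
Hypotheses (rhg_le : `|r * h - s * g| <= M) (thg_le : `|t * h - s * g| <= M).
Hypothesis tM'_le : t * M' <= M.

Let s_ge0 : 0 <= s. Proof. exact: ltW. Qed.
Let t_gt0 : 0 < t. Proof. exact: lt_le_trans s_le_t. Qed.
Let M'_ge0 : 0 <= M'. Proof. exact: le_trans h_le. Qed.
Let sM'_le : s * M' <= M. Proof. by apply: le_trans tM'_le; rewrite ler_wpM2r. Qed.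

Let split_norm a b :
  `|a * (r * h - s * g) - s * b * h| <= `|a| * `|r * h - s * g| + s * (`|b| * `|h|).
Proof.
by rewrite (le_trans (ler_normB _ _)) // !normrM (gtr0_norm s_gt0) mulrA.
Qed.

Lemma two_minor_bound_small_b a b : `|a| <= t ^+ 2 -> `|b| <= s * t ->
  `|a * (r * h - s * g) - s * b * h| <= t ^+ 2 * M + t * s ^+ 2 * M'.
Proof.
move=> a_le b_le; apply: le_trans (split_norm a b) _.
have aD : `|a| * `|r * h - s * g| <= t ^+ 2 * M by rewrite ler_pM.
have bh : s * (`|b| * `|h|) <= s * (s * t * M') by rewrite ler_wpM2l // ler_pM.
lra.
Qed.

Lemma two_minor_bound_small_a a b : `|a| <= s * t -> `|b| <= t ^+ 2 ->
  `|a * (r * h - s * g) - s * b * h| <= t ^+ 2 * M + t * s ^+ 2 * M'.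
Proof.
move=> a_le b_le; apply: le_trans (split_norm a b) _.
have aD : `|a| * `|r * h - s * g| <= s * t * M by rewrite ler_pM.
have bh : s * (`|b| * `|h|) <= s * (t ^+ 2 * M') by rewrite ler_wpM2l // ler_pM.
have : 0 <= t * (t - s) * (M - s * M').
  by rewrite mulr_ge0 ?mulr_ge0 ?subr_ge0 // ltW.
lra.
Qed.

Lemma two_minor_bound_large_ar a b : 0 <= a <= t ^+ 2 -> 0 <= b -> s * b <= a * r ->
  `|a * (r * h - s * g) - s * b * h| <= t ^+ 2 * M + t * s ^+ 2 * M'.
Proof.
move=> /andP[a_ge0 a_le] b_ge0 sb_le.
(* a (r h - s g) - s b h is a combination of the determinants t h - s g and - s g
   with nonnegative weights u, v summing to a. *)
set u := (a * r - s * b) / t; set v := (a * (t - r) + s * b) / t.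
have -> : a * (r * h - s * g) - s * b * h = u * (t * h - s * g) + v * (- (s * g)).
  by rewrite /u /v; field; rewrite gt_eqF.
have u_ge0 : 0 <= u by rewrite divr_ge0 ?subr_ge0 // ltW.
have v_ge0 : 0 <= v by rewrite divr_ge0 ?addr_ge0 ?mulr_ge0 ?subr_ge0 // ltW.
have uv : u + v = a by rewrite /u /v; field; rewrite gt_eqF.
have sg_le : `|- (s * g)| <= M.
  by rewrite normrN normrM gtr0_norm // (le_trans _ sM'_le) // ler_wpM2l // ltW.
apply: le_trans (ler_normD _ _) _.
rewrite (normrM u) (normrM v) (ger0_norm u_ge0) (ger0_norm v_ge0).
have uM : u * `|t * h - s * g| <= u * M by rewrite ler_wpM2l.
have vM : v * `|- (s * g)| <= v * M by rewrite ler_wpM2l.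
have aM : a * M <= t ^+ 2 * M by rewrite ler_wpM2r // (le_trans _ sg_le).
have uvM : u * M + v * M = a * M by rewrite -mulrDl uv.
have : 0 <= t * s ^+ 2 * M' by rewrite !mulr_ge0 ?sqr_ge0 // ltW.
lra.
Qed.

Lemma two_minor_bound_large_sb a b : 0 <= a <= t ^+ 2 -> b <= t ^+ 2 -> a * r <= s * b ->
  `|a * (r * h - s * g) - s * b * h| <= t ^+ 2 * M + t * s ^+ 2 * M'.
Proof.
move=> /andP[a_ge0 a_le] b_le ar_le.
have -> : a * (r * h - s * g) - s * b * h = (a * r - s * b) * h - a * s * g by ring.
apply: le_trans (ler_normB _ _) _.
have ar_ge0 : 0 <= a * r by rewrite mulr_ge0.
have as_ge0 : 0 <= a * s by rewrite mulr_ge0 // ltW.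
rewrite normrM [`|a * s * g|]normrM ler0_norm ?subr_le0 // opprB (ger0_norm as_ge0).
have sb_le : s * b <= s * t ^+ 2 by rewrite ler_wpM2l // ltW.
have sbh : (s * b - a * r) * `|h| <= s * t ^+ 2 * M'.
  by rewrite ler_pM ?subr_ge0 //; lra.
have asg : a * s * `|g| <= s * t ^+ 2 * M'.
  by rewrite ler_pM // [a * s]mulrC ler_wpM2l // ltW.
have : 0 <= t * (t - s) ^+ 2 * M'.
  by rewrite mulr_ge0 ?mulr_ge0 ?subr_ge0 // ltW.
have : t ^+ 2 * (t * M') <= t ^+ 2 * M by rewrite ler_wpM2l ?sqr_ge0.
lra.
Qed.

Lemma two_minor_bound a b : -(s * t) <= a <= t ^+ 2 -> -(s * t) <= b <= t ^+ 2 ->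
  `|a * (r * h - s * g) - s * b * h| <= t ^+ 2 * M + t * s ^+ 2 * M'.
Proof.
move=> /andP[a_ge a_le] /andP[b_ge b_le].
have st_le : s * t <= t ^+ 2 by rewrite expr2 ler_wpM2r // ltW.
have [a_small|a_large] := lerP `|a| (s * t).
  by apply: two_minor_bound_small_a; rewrite // ler_norml b_le andbT; lra.
have [b_small|b_large] := lerP `|b| (s * t).
  by apply: two_minor_bound_small_b; rewrite // ler_norml a_le andbT; lra.
have a_ge0 : 0 <= a by move: a_large; rewrite ltr_normr; lra.
have b_ge0 : 0 <= b by move: b_large; rewrite ltr_normr; lra.
have [sb_le|ar_le] := lerP (s * b) (a * r).
  by apply: two_minor_bound_large_ar; rewrite ?a_ge0.
by apply: two_minor_bound_large_sb; rewrite ?a_ge0 // ltW.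
Qed.
End TwoMinorBound.

Lemma det_norm_le (R : numDomainType) m (B : 'M[R]_m) c :
  (forall i j, `|B i j| <= c) -> `|\det B| <= c ^+ m *+ m`!.
Proof.
move=> B_le; rewrite /determinant; apply: le_trans (ler_norm_sum _ _ _) _.
rewrite -(card_Sn m) -sumr_const; apply: ler_sum => p _.
rewrite normrM normrX normrN1 expr1n mul1r normr_prod.
rewrite -[X in c ^+ X](card_ord m) -prodr_const.
by apply: ler_prod => i _; rewrite normr_ge0 B_le.
Qed.

Lemma expand_det_col0 (R : comPzRingType) m (C : 'M[R]_m.+2) :
  (forall i : 'I_m.+2, (1 < i)%N -> C i 0 = 0) ->
  \det C = C 0 0 * \det (row' 0 (col' 0 C))
            - C (lift 0 0) 0 * \det (row' (lift 0 0) (col' 0 C)).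
Proof.
move=> C_col0; rewrite (expand_det_col _ 0) !big_ord_recl big1 ?addr0; last first.
  by move=> i _; rewrite C_col0 ?mul0r.
by rewrite /cofactor !expr1 expr0 mul1r mulN1r mulrN.
Qed.

Section HessenbergClass.
Variables (R : realType) (s : R) (P : R -> Prop).

Lemma inG_mxsub m p (f g : 'I_p -> 'I_m) (B : 'M[R]_m) :
  (forall i j : 'I_p, (i : nat) = j.+1 -> (f i : nat) = (g j).+1) ->
  (forall i j : 'I_p, (j.+1 < i)%N -> ((g j).+1 < f i)%N) ->
  (forall i j : 'I_p, (i <= j)%N -> (f i <= g j)%N) ->
  inG s P B -> inG s P (mxsub f g B).
Proof.
move=> f_sub f_below f_diag hB i j; rewrite mxE.
have [B_sub [B_below B_diag]] := hB (f i) (g j).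
split; [move/f_sub/B_sub | split; [move/f_below/B_below | move/f_diag/B_diag]] => //.
Qed.

Lemma inG_minor00 m (B : 'M[R]_m.+1) :
  inG s P B -> inG s P (row' 0 (col' 0 B)).
Proof.
have -> : row' 0 (col' 0 B) = mxsub (lift 0) (lift 0) B.
  by apply/matrixP => i j; rewrite !mxE.
by apply: inG_mxsub => i j; rewrite /= /bump; lia.
Qed.

Lemma inG_minor10 m (B : 'M[R]_m.+2) :
  inG s P B -> inG s P (row' (lift 0 0) (col' 0 B)).
Proof.
have -> : row' (lift 0 0) (col' 0 B) = mxsub (lift (lift 0 0)) (lift 0) B.
  by apply/matrixP => i j; rewrite !mxE.
by apply: inG_mxsub => i j; rewrite /= /bump; lia.
Qed.

Definition border_mx m x (B : 'M[R]_m) : 'M[R]_(1 + m) :=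
  block_mx x%:M 0 (\col_i ((i == 0 :> nat)%:R * s)) B.

Lemma det_border_mx m x (B : 'M[R]_m) : \det (border_mx x B) = x * \det B.
Proof. by rewrite det_lblock det_scalar1. Qed.

Lemma inG_border_mx m x (B : 'M[R]_m) :
  P x -> P 0 -> inG s P B -> inG s P (border_mx x B).
Proof.
move=> Px P0 hB i j; rewrite /border_mx.
case: (split_ordP i) => i' ->; case: (split_ordP j) => j' ->.
- by rewrite block_mxEul !ord1 mxE mulr1n.
- by rewrite block_mxEur mxE !ord1.
- rewrite block_mxEdl mxE !ord1 /=.
  case: (i' == 0 :> nat) / eqP => [-> | ?]; rewrite ?mul1r ?mul0r;
    by (split; last split) => h //; exfalso; lia.
- rewrite block_mxEdr /= !add1n; have [B_sub [B_below B_diag]] := hB i' j'.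
  by (split; last split) => [/succn_inj/B_sub | /B_below | /B_diag].
Qed.

Definition set_corner m (B : 'M[R]_m.+1) x : 'M[R]_m.+1 :=
  \matrix_(i, j) if (i == 0) && (j == 0) then x else B i j.

Lemma set_cornerK m (B : 'M[R]_m.+1) : set_corner B (B 0 0) = B.
Proof. by apply/matrixP => i j; rewrite mxE; case: andP => // -[/eqP-> /eqP->]. Qed.

Lemma col'0_set_corner m (B : 'M[R]_m.+1) x : col' 0 (set_corner B x) = col' 0 B.
Proof. by apply/matrixP => i j; rewrite !mxE andbF. Qed.

Lemma inG_set_corner m (B : 'M[R]_m.+1) x : P x -> inG s P B -> inG s P (set_corner B x).
Proof.
move=> Px hB i j; rewrite mxE; case: andP => [[/eqP-> /eqP->] | _]; last exact: hB.
by split=> // _.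
Qed.

Lemma det_set_corner m (B : 'M[R]_m.+2) x : inG s P B ->
  \det (set_corner B x) = x * \det (row' 0 (col' 0 B)) - s * \det (row' (lift 0 0) (col' 0 B)).
Proof.
move=> hB; rewrite expand_det_col0 => [|i i_gt1].
  by have [sub _] := hB (lift 0 0) 0; rewrite !col'0_set_corner !mxE eqxx /= sub.
rewrite mxE andbT ifN; first by have [_ [-> //]] := hB i 0.
by apply: contraTN i_gt1 => /eqP->.
Qed.

Definition window n (A : 'M[R]_n) k m : 'M[R]_m :=
  \matrix_(i < m, j < m) entry A (i + k) (j + k).

Lemma HkE n (A : 'M[R]_n) k : Hk A k = \det (window A k (n.+1 - k)).
Proof.
rewrite /Hk; case: eqP => [->|//].
by move: (window _ _ _); rewrite subnn => W; rewrite det_mx00.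
Qed.

Lemma window_minor00 n (A : 'M[R]_n) k m :
  row' 0 (col' 0 (window A k m.+1)) = window A k.+1 m.
Proof. by apply/matrixP => i j; rewrite !mxE !lift0 !addSnnS. Qed.

Lemma entry_succ n (A : 'M[R]_n) i j (lt_in : (i < n)%N) (lt_jn : (j < n)%N) :
  entry A i.+1 j.+1 = A (Ordinal lt_in) (Ordinal lt_jn).
Proof. by rewrite /entry !insubT. Qed.

Lemma inG_entry n (A : 'M[R]_n) i j :
  (0 < i)%N -> (i <= j)%N -> (j <= n)%N -> inG s P A -> P (entry A i j).
Proof.
case: i j => [|i] [|j] // _ le_ij lt_jn hA.
have lt_in : (i < n)%N by apply: leq_ltn_trans lt_jn.
have [_ [_ diag]] := hA (Ordinal lt_in) (Ordinal lt_jn).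
by rewrite (entry_succ A lt_in lt_jn); apply: diag.
Qed.

Lemma inG_window n (A : 'M[R]_n) k m :
  (k + m <= n)%N -> inG s P A -> inG s P (window A k.+1 m).
Proof.
move=> le_kmn hA.
have lt_n (i : 'I_m) : (i + k < n)%N by rewrite addnC (leq_trans _ le_kmn) // ltn_add2l.
pose f i := Ordinal (lt_n i).
have -> : window A k.+1 m = mxsub f f A.
  by apply/matrixP => i j; rewrite !mxE !addnS entry_succ.
by apply: inG_mxsub hA => i j /=; lia.
Qed.

End HessenbergClass.

Local Notation hess s t := (inG s (fun y => 0 <= y <= t)).

Section Hessenberg.
Variables (R : realType) (s t : R).
Hypotheses (s_gt0 : 0 < s) (s_le_t : s <= t).

Let t_gt0 : 0 < t. Proof. exact: lt_le_trans s_le_t. Qed.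

Lemma hess_entry_norm m (B : 'M[R]_m) i j : hess s t B -> `|B i j| <= t.
Proof.
move=> /(_ i j) [sub [below diag]].
case: (ltngtP i j.+1) => [/diag/andP[B_ge0 B_le]|/below->|/sub->].
- by rewrite ger0_norm.
- by rewrite normr0 ltW.
- by rewrite gtr0_norm.
Qed.

Lemma det_le_Mmax m (B : 'M[R]_m) : hess s t B -> `|\det B| <= Mmax s t m.
Proof.
move=> hB; rewrite /Mmax; case: eqP => [m0|_].
  by move: B {hB}; rewrite m0 => B; rewrite det_mx00 normr1.
apply: ub_le_sup; last by exists B.
exists (t ^+ m *+ m`!) => _ [C [hC ->]].
by apply: det_norm_le => i j; apply: hess_entry_norm.
Qed.


Lemma hess_exists m : exists B : 'M[R]_m, hess s t B.
Proof.
elim: m => [|m [B hB]]; first by exists 0 => -[].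
by exists (border_mx s t B); apply: inG_border_mx; rewrite ?lexx ?ltW.
Qed.

Lemma mul_Mmax_le_succ m : t * Mmax s t m <= Mmax s t m.+1.
Proof.
have border_le (B : 'M[R]_m) : hess s t B -> t * `|\det B| <= Mmax s t m.+1.
  move=> hB; rewrite -[t in t * _](gtr0_norm t_gt0) -normrM -(det_border_mx s).
  by apply: (@det_le_Mmax m.+1); apply: inG_border_mx; rewrite ?lexx ?ltW.
case: m border_le => [|m] border_le.
  have hB0 : hess s t (0 : 'M[R]_0) by move=> -[].
  by have := border_le 0 hB0; rewrite det_mx00 normr1.
rewrite -ler_pdivlMl //; apply: ge_sup.
  by have [B hB] := hess_exists m.+1; exists `|\det B|, B.
by move=> _ [B [hB ->]]; rewrite ler_pdivlMl // border_le.
Qed.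

Lemma hess_two_minor_bound m (B : 'M[R]_m.+1) a b : hess s t B ->
  -(s * t) <= a <= t ^+ 2 -> -(s * t) <= b <= t ^+ 2 ->
  `|a * \det B - b * s * \det (row' 0 (col' 0 B))|
    <= t ^+ 2 * Mmax s t m.+1 + t * s ^+ 2 * Mmax s t m.
Proof.
move=> hB ha hb; rewrite [b * s]mulrC.
have [_ [_ /(_ (leqnn 0))/andP[B00_ge0 B00_le]]] := hB 0 0.
case: m B hB B00_ge0 B00_le => [|m] B hB B00_ge0 B00_le.
  have Mmax0 : Mmax s t 0 = 1 by [].
  rewrite det_mx11 det_mx00 mulr1.
  have -> : a * B 0 0 - s * b = a * (B 0 0 * 1 - s * 0) - s * b * 1 by ring.
  apply: two_minor_bound;
    rewrite ?mul_Mmax_le_succ ?Mmax0 ?normr1 ?normr0 ?mulr1 ?mulr0 ?subr0 //.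
    by rewrite -det_mx11 det_le_Mmax.
  by rewrite gtr0_norm // (le_trans _ (mul_Mmax_le_succ 0)) // Mmax0 mulr1.
set h := \det (row' 0 (col' 0 B)); set g := \det (row' (lift 0 0) (col' 0 B)).
have corner x : \det (set_corner B x) = x * h - s * g by exact: det_set_corner hB.
rewrite -[in \det B](set_cornerK B) corner.
apply: two_minor_bound => //; rewrite -?corner ?set_cornerK ?mul_Mmax_le_succ //.
- exact/det_le_Mmax/inG_minor00.
- exact/det_le_Mmax/inG_minor10.
- exact: det_le_Mmax.
- by apply/det_le_Mmax/inG_set_corner; rewrite // lexx ltW.
Qed.

End Hessenberg.

Theorem lemma3p2 (R : realType) (s t : R) (n : nat) (A : 'M[R]_n) :
  0 < s -> s <= t -> (3 <= n)%N ->
  inG s (fun y => 0 <= y <= t) A ->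
  (forall k : nat, (2 <= k)%N -> (k <= n - 1)%N ->
     `| (entry A 1 1 * entry A 2 k - s * entry A 1 k) * Hk A k.+1
        - (entry A 1 1 * entry A 2 k.+1 - s * entry A 1 k.+1) * s * Hk A k.+2 |
     <= t ^+ 2 * Mmax s t (n - k) + t * s ^+ 2 * Mmax s t (n - k - 1))
  /\
  (~~ odd n ->
     `| (entry A 1 1 * entry A 2 n - s * entry A 1 n) * Hk A n.+1 |
     <= t ^+ 2 * Mmax s t 0).
Proof.
move=> s_gt0 s_le_t n_ge3 hA.
have coef_range k : (2 <= k)%N -> (k <= n)%N ->
    -(s * t) <= entry A 1 1 * entry A 2 k - s * entry A 1 k <= t ^+ 2.
  by move=> k_ge2 k_le; apply: mul_sub_range (ltW s_gt0) _ _ _;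
    apply: inG_entry hA; lia.
split=> [k k_ge2 k_lt | _].
  have n_k : (n - k = (n - k.+1).+1)%N by lia.
  rewrite (HkE A k.+1) (HkE A k.+2) !subSS n_k subn1 /= -(window_minor00 A k.+1).
  apply: hess_two_minor_bound => //;
    [apply: inG_window hA | apply: coef_range | apply: coef_range]; lia.
have /andP[coef_ge coef_le] := coef_range n (ltnW n_ge3) (leqnn n).
rewrite /Hk eqxx /Mmax /= !mulr1 ler_norml coef_le andbT.
apply: le_trans coef_ge; rewrite lerN2 expr2 ler_wpM2r //.
exact/ltW/(lt_le_trans s_gt0 s_le_t).
Qed.
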